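(* For every integer $j\geq 3$, the function $l\mapsto \mathbf{g}_1(j,l)$ is strictly increasing on the integers $2\leq l\leq \lfloor (j+1)/2\rfloor$.
   Context: For $\varphi\in\mathbb{R}\setminus2\pi\mathbb{Z}$ let $\mathbf{f}(\varphi)=\frac{1}{8|\sin(\varphi/2)|}\left(\frac{2}{\sin^2(\varphi/2)}-1\right)+\cos\varphi$. For integers $j\geq1$, $l\geq1$ define $\mathbf{g}_1(j,l)=\sum_{k=1}^{j-1}\mathbf{f}\!\left(\frac{2k\pi}{j}\right)\left(1-\cos\frac{2(l-1)k\pi}{j}\right)$. $\lfloor x\rfloor$ is the largest integer not exceeding $x$. *)

From Stdlib Require Import Reals Lra Lia.
Open Scope R_scope.

Definition fbold (phi : R) : R :=
  / (8 * Rabs (sin (phi / 2))) * (2 / (sin (phi / 2)) ^ 2 - 1) + cos phi.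

Fixpoint sum_1_to (n : nat) (F : nat -> R) : R :=
  match n with
  | O => 0
  | S m => sum_1_to m F + F (S m)
  end.

Definition g1 (j l : nat) : R :=
  sum_1_to (j - 1)%nat (fun k =>
    fbold (2 * INR k * PI / INR j)
    * (1 - cos (2 * (INR l - 1) * INR k * PI / INR j))).

From Stdlib Require Import Reals Lra Lia.
Open Scope R_scope.

(* With the nodes x_k = kπ/j, product-to-sum formulas split the increment
   g1(j,l+1) - g1(j,l) into M(2l-1) = Σ_k w(x_k) sin((2l-1)x_k), where
   w(x) = 1/(2 sin²x) - 1/4, plus a combination of the sums Σ_k cos(2r x_k), which
   equal -1 for 0 < r < j and therefore contribute a nonnegative amount.
   The sequence a_i = M(2i+1) is concave: its second difference is a negative
   combination of the sums Σ_k sin((2i+1)x_k) = cot((2i+1)π/(2j)) ≥ 0.  Moreover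
   a_1 > 0 (from tan y ≥ y), and at i = ⌊j/2⌋ the sequence either vanishes (j odd)
   or satisfies a_i = -a_(i-1) (j even), so it is positive in between. *)

Lemma sum_1_to_ext n F G :
  (forall k, (1 <= k <= n)%nat -> F k = G k) -> sum_1_to n F = sum_1_to n G.
Proof.
  induction n as [|n IH]; intros HFG; simpl; [reflexivity|].
  rewrite IH by (intros; apply HFG; lia). rewrite HFG by lia. reflexivity.
Qed.

Lemma sum_1_to_plus n F G :
  sum_1_to n (fun k => F k + G k) = sum_1_to n F + sum_1_to n G.
Proof. induction n as [|n IH]; simpl; [ring | rewrite IH; ring]. Qed.

Lemma sum_1_to_scal n c F : sum_1_to n (fun k => c * F k) = c * sum_1_to n F.
Proof. induction n as [|n IH]; simpl; [ring | rewrite IH; ring]. Qed.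

Lemma sum_1_to_minus n F G :
  sum_1_to n (fun k => F k - G k) = sum_1_to n F - sum_1_to n G.
Proof. induction n as [|n IH]; simpl; [ring | rewrite IH; ring]. Qed.

Lemma sum_1_to_lin3 n a b c F G H :
  sum_1_to n (fun k => a * F k + b * G k + c * H k) =
  a * sum_1_to n F + b * sum_1_to n G + c * sum_1_to n H.
Proof. induction n as [|n IH]; simpl; [ring | rewrite IH; ring]. Qed.

Lemma sum_1_to_const n c : sum_1_to n (fun _ => c) = INR n * c.
Proof. induction n as [|n IH]; simpl sum_1_to; [simpl; ring | rewrite IH, S_INR; ring]. Qed.

Lemma sum_1_to_le n F G :
  (forall k, (1 <= k <= n)%nat -> F k <= G k) -> sum_1_to n F <= sum_1_to n G.
Proof.
  induction n as [|n IH]; intros HFG; simpl; [lra|].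
  apply Rplus_le_compat; [apply IH; intros; apply HFG | apply HFG]; lia.
Qed.

Lemma sum_1_to_eq0 n F : (forall k, (1 <= k <= n)%nat -> F k = 0) -> sum_1_to n F = 0.
Proof. intros HF. rewrite (sum_1_to_ext _ _ (fun _ => 0)), sum_1_to_const by exact HF; ring. Qed.

Lemma INR_gt0 n : (1 <= n)%nat -> 0 < INR n.
Proof. intros; apply lt_0_INR; lia. Qed.

Lemma sin_INR_mul_PI k : sin (INR k * PI) = 0.
Proof. apply sin_eq_0_1. exists (Z.of_nat k). now rewrite <- INR_IZR_INZ. Qed.

Lemma sin_half_mul_sum_sin n a :
  2 * sin (a / 2) * sum_1_to n (fun k => sin (INR k * a)) =
  cos (a / 2) - cos ((2 * INR n + 1) * a / 2).
Proof.
  induction n as [|n IH]; cbn [sum_1_to].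
  - simpl INR. replace ((2 * 0 + 1) * a / 2) with (a / 2) by field. ring.
  - rewrite Rmult_plus_distr_l, IH, S_INR.
    replace ((2 * INR n + 1) * a / 2) with ((INR n + 1) * a - a / 2) by field.
    replace ((2 * (INR n + 1) + 1) * a / 2) with ((INR n + 1) * a + a / 2) by field.
    rewrite cos_minus, cos_plus. ring.
Qed.

Lemma sin_half_mul_sum_cos n a :
  2 * sin (a / 2) * sum_1_to n (fun k => cos (INR k * a)) =
  sin ((2 * INR n + 1) * a / 2) - sin (a / 2).
Proof.
  induction n as [|n IH]; cbn [sum_1_to].
  - simpl INR. replace ((2 * 0 + 1) * a / 2) with (a / 2) by field. ring.
  - rewrite Rmult_plus_distr_l, IH, S_INR.
    replace ((2 * INR n + 1) * a / 2) with ((INR n + 1) * a - a / 2) by field.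
    replace ((2 * (INR n + 1) + 1) * a / 2) with ((INR n + 1) * a + a / 2) by field.
    rewrite sin_minus, sin_plus. ring.
Qed.

Lemma mul_cos_le_sin y : 0 < y <= 2 -> y * cos y <= sin y.
Proof.
  intros Hy.
  assert (Hcos : cos y <= 1 - y ^ 2 / 2 + y ^ 4 / 24).
  { destruct (pre_cos_bound y 0) as [_ H]; try lra.
    unfold cos_approx, cos_term in H; simpl in H. eapply Rle_trans; [exact H|].
    right; field. }
  assert (Hsin : y - y ^ 3 / 6 <= sin y).
  { destruct (pre_sin_bound y 0) as [H _]; try lra.
    unfold sin_approx, sin_term in H; simpl in H. eapply Rle_trans; [|exact H].
    right; field. }
  assert (y * cos y <= y * (1 - y ^ 2 / 2 + y ^ 4 / 24)) by (apply Rmult_le_compat_l; lra).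
  assert (y ^ 3 * (8 - y ^ 2) >= 0) by (apply Rle_ge, Rmult_le_pos; nra).
  nra.
Qed.

Definition concave_upto (a : nat -> R) (q : nat) : Prop :=
  forall i, (i + 2 <= q)%nat -> a (i + 2)%nat - a (i + 1)%nat <= a (i + 1)%nat - a i.

Lemma concave_upto_le a q q' : (q' <= q)%nat -> concave_upto a q -> concave_upto a q'.
Proof. intros Hq Ha i Hi. apply Ha. lia. Qed.

Lemma concave_upto_incr_antitone a q : concave_upto a q ->
  forall m n, (m <= n)%nat -> (n + 1 <= q)%nat -> a (S n) - a n <= a (S m) - a m.
Proof.
  intros Ha m n Hmn. induction Hmn as [|n Hmn IH]; intros Hnq; [lra|].
  pose proof (Ha n ltac:(lia)) as Hn.
  replace (n + 2)%nat with (S (S n)) in Hn by lia.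
  replace (n + 1)%nat with (S n) in Hn by lia.
  specialize (IH ltac:(lia)). lra.
Qed.

Lemma incr_ge_telescope (a : nat -> R) c i n :
  (forall m, (i <= m < i + n)%nat -> c <= a (S m) - a m) -> a i + INR n * c <= a (i + n)%nat.
Proof.
  induction n as [|n IH]; intros Hc.
  - rewrite Nat.add_0_r. simpl. lra.
  - rewrite S_INR, Nat.add_succ_r.
    specialize (IH ltac:(intros; apply Hc; lia)). specialize (Hc (i + n)%nat ltac:(lia)). lra.
Qed.

Lemma incr_le_telescope (a : nat -> R) c i n :
  (forall m, (i <= m < i + n)%nat -> a (S m) - a m <= c) -> a (i + n)%nat <= a i + INR n * c.
Proof.
  intros Hc. pose proof (incr_ge_telescope (fun m => - a m) (- c) i n) as H.
  cbv beta in H. enough (- a i + INR n * - c <= - a (i + n)%nat) by lra.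
  apply H. intros m Hm. specialize (Hc m Hm). lra.
Qed.

(* The sequence lies below the line through [a i] of slope [c = a (S i) - a i] on both
   sides of [i]; whatever the sign of [c], [a p > 0] or [a q >= 0] then forces [a i > 0]. *)
Lemma concave_upto_gt0 a p q : concave_upto a q -> 0 < a p -> 0 <= a q ->
  forall i, (p <= i < q)%nat -> 0 < a i.
Proof.
  intros Ha Hp Hq i Hi. set (c := a (S i) - a i).
  assert (Hleft : a p + INR (i - p) * c <= a i).
  { replace i with (p + (i - p))%nat at 2 by lia.
    apply incr_ge_telescope. intros m Hm. apply (concave_upto_incr_antitone a q Ha); lia. }
  assert (Hright : a q <= a i + INR (q - i) * c).
  { replace q with (i + (q - i))%nat at 1 by lia.
    apply incr_le_telescope. intros m Hm. apply (concave_upto_incr_antitone a q Ha); lia. }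
  pose proof (pos_INR (i - p)). pose proof (le_INR 1 (q - i) ltac:(lia)). simpl INR in *.
  destruct (Rle_or_lt 0 c); nra.
Qed.

Lemma concave_upto_gt0_antisym a p q : concave_upto a q -> 0 < a p -> (p < q)%nat ->
  a q = - a (q - 1)%nat -> forall i, (p <= i < q)%nat -> 0 < a i.
Proof.
  intros Ha Hp Hpq Hq.
  assert (Hq1 : 0 < a (q - 1)%nat).
  { destruct (Nat.eq_dec p (q - 1)) as [<-|Hne]; [exact Hp|].
    destruct (Rlt_or_le 0 (a (q - 1)%nat)) as [|Hle]; [assumption|].
    apply (concave_upto_gt0 a p q Ha Hp); lra || lia. }
  intros i Hi. destruct (Nat.eq_dec i (q - 1)) as [->|Hne]; [exact Hq1|].
  apply (concave_upto_gt0 a p (q - 1)); [| exact Hp | lra | lia].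
  apply (concave_upto_le a q); [lia | exact Ha].
Qed.

Definition weight (x : R) : R := / (2 * sin x ^ 2) - / 4.

(* Since [cos (2(L-1)x) - cos (2Lx) = 2 sin x sin ((2L-1)x)] and
   [fbold (2x) = weight x / (2 sin x) + cos (2x)], the term [cos (2x)] produces the cosines. *)
Lemma fbold_mul_cos_incr x L : 0 < sin x ->
  fbold (2 * x) * (1 - cos (2 * L * x)) - fbold (2 * x) * (1 - cos (2 * (L - 1) * x)) =
  weight x * sin ((2 * L - 1) * x) +
  / 2 * (cos (2 * L * x) + cos (2 * (L - 2) * x) - cos (2 * (L + 1) * x) - cos (2 * (L - 1) * x)).
Proof.
  intros Hx. set (b := (2 * L - 1) * x).
  replace (2 * L * x) with (b + x) by (unfold b; ring).
  replace (2 * (L - 1) * x) with (b - x) by (unfold b; ring).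
  replace (2 * (L - 2) * x) with (b - 3 * x) by (unfold b; ring).
  replace (2 * (L + 1) * x) with (b + 3 * x) by (unfold b; ring).
  assert (Hsin3 : sin (3 * x) = sin x + 2 * cos (2 * x) * sin x).
  { replace (3 * x) with (2 * x + x) by ring.
    rewrite sin_plus, sin_2a, cos_2a_cos. ring. }
  rewrite !cos_plus, !cos_minus, Hsin3.
  unfold fbold, weight. replace (2 * x / 2) with x by field.
  rewrite Rabs_pos_eq by lra. field. lra.
Qed.

Lemma weight_mul_sin_second_diff x b : sin x <> 0 ->
  weight x * (sin (b + 2 * x) - 2 * sin b + sin (b - 2 * x)) =
  - (3 / 2) * sin b - / 4 * (sin (b + 2 * x) + sin (b - 2 * x)).
Proof.
  intros Hx.
  assert (Hsum : sin (b + 2 * x) + sin (b - 2 * x) = 2 * sin b * (1 - 2 * sin x * sin x))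
    by (rewrite sin_plus, sin_minus, cos_2a_sin; ring).
  replace (sin (b + 2 * x) - 2 * sin b + sin (b - 2 * x))
    with (sin (b + 2 * x) + sin (b - 2 * x) - 2 * sin b) by ring.
  rewrite Hsum. unfold weight. field. exact Hx.
Qed.

(* A tangent-line bound; summed over the nodes, with [sin_sum j 1 <= 2 j / PI], it gives
   [weighted_sin_sum j 3 > 0] as soon as [j >= 5]. *)
Lemma weight_mul_sin3_ge x : 0 < sin x -> 27 / 10 - 16 / 5 * sin x <= weight x * sin (3 * x).
Proof.
  intros Hx.
  assert (Hsin3 : sin (3 * x) = 3 * sin x - 4 * sin x ^ 3).
  { replace (3 * x) with (2 * x + x) by ring.
    rewrite sin_plus, sin_2a, cos_2a_sin.
    pose proof (sin2_cos2 x) as Hpyth; unfold Rsqr in Hpyth. nra. }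
  rewrite Hsin3. unfold weight. set (s := sin x) in *.
  (* multiplied by [s], the claim becomes the positivity of this quartic *)
  assert (Hquart : 0 < s ^ 4 + 9 / 20 * s ^ 2 - 27 / 10 * s + 3 / 2).
  { assert (s ^ 4 + 9 / 20 * s ^ 2 - 27 / 10 * s + 3 / 2 =
      (s ^ 2 - 31 / 50) ^ 2 + (13 / 10 * s - 27 / 26) ^ 2 + (3 / 2 - (31 / 50) ^ 2 - (27 / 26) ^ 2))
      by field.
    pose proof (pow2_ge_0 (s ^ 2 - 31 / 50)). pose proof (pow2_ge_0 (13 / 10 * s - 27 / 26)).
    lra. }
  assert ((/ (2 * s ^ 2) - / 4) * (3 * s - 4 * s ^ 3) - (27 / 10 - 16 / 5 * s) =
          (s ^ 4 + 9 / 20 * s ^ 2 - 27 / 10 * s + 3 / 2) / s) by (field; lra).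
  assert (0 < (s ^ 4 + 9 / 20 * s ^ 2 - 27 / 10 * s + 3 / 2) / s) by (apply Rdiv_lt_0_compat; lra).
  lra.
Qed.

Definition node (j k : nat) : R := INR k * PI / INR j.

Definition sin_sum (j n : nat) : R :=
  sum_1_to (j - 1) (fun k => sin (INR n * node j k)).

Definition cos_sum (j r : nat) : R :=
  sum_1_to (j - 1) (fun k => cos (2 * INR r * node j k)).

Definition weighted_sin_sum (j m : nat) : R :=
  sum_1_to (j - 1) (fun k => weight (node j k) * sin (INR m * node j k)).

Lemma sin_node_gt0 j k : (1 <= k <= j - 1)%nat -> 0 < sin (node j k).
Proof.
  intros Hk. pose proof PI_RGT_0.
  assert (Hk1 : 1 <= INR k) by (apply (le_INR 1); lia).
  assert (Hkj : INR k < INR j) by (apply lt_INR; lia).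
  apply sin_gt_0; unfold node.
  - apply Rdiv_lt_0_compat; nra.
  - apply Rmult_lt_reg_r with (INR j); [lra|].
    unfold Rdiv; rewrite Rmult_assoc, Rinv_l by lra; nra.
Qed.

Lemma sin_node_reflect j k : (1 <= j)%nat ->
  sin (INR (j + 1) * node j k) = - sin (INR (j - 1) * node j k).
Proof.
  intros Hj. pose proof (INR_gt0 j Hj).
  replace (INR (j + 1) * node j k) with (INR k * PI + node j k)
    by (unfold node; rewrite plus_INR; simpl INR; field; lra).
  replace (INR (j - 1) * node j k) with (INR k * PI - node j k)
    by (unfold node; rewrite minus_INR by lia; simpl INR; field; lra).
  rewrite sin_plus, sin_minus, sin_INR_mul_PI. ring.
Qed.

Lemma sin_mul_sin_sum_odd j p : (1 <= j)%nat ->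
  let y := INR (2 * p + 1) * PI / (2 * INR j) in sin y * sin_sum j (2 * p + 1) = cos y.
Proof.
  intros Hj y. pose proof (INR_gt0 j Hj).
  pose proof (sin_half_mul_sum_sin (j - 1) (INR (2 * p + 1) * PI / INR j)) as Htel.
  replace (INR (2 * p + 1) * PI / INR j / 2) with y in Htel by (unfold y; field; lra).
  rewrite (sum_1_to_ext _ _ (fun k => sin (INR (2 * p + 1) * node j k))) in Htel
    by (intros; unfold node; f_equal; field; lra).
  replace ((2 * INR (j - 1) + 1) * (INR (2 * p + 1) * PI / INR j) / 2)
    with ((PI - y) + 2 * INR p * PI) in Htel.
  - rewrite cos_period, Rtrigo_facts.cos_pi_minus in Htel. fold (sin_sum j (2 * p + 1)) in Htel.
    lra.
  - unfold y. rewrite minus_INR, plus_INR, mult_INR by lia. simpl INR. field. lra.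
Qed.

Lemma sin_sum_odd_ge0 j p : (2 * p + 1 <= j)%nat -> 0 <= sin_sum j (2 * p + 1).
Proof.
  intros Hpj. pose proof (INR_gt0 j ltac:(lia)). pose proof PI_RGT_0.
  pose proof (sin_mul_sin_sum_odd j p ltac:(lia)) as Hcot; cbv zeta in Hcot.
  set (y := INR (2 * p + 1) * PI / (2 * INR j)) in Hcot.
  assert (Hn1 : 1 <= INR (2 * p + 1)) by (apply (le_INR 1); lia).
  assert (Hnj : INR (2 * p + 1) <= INR j) by (apply le_INR; lia).
  assert (Hy0 : 0 < y) by (apply Rdiv_lt_0_compat; nra).
  assert (Hy1 : y <= PI / 2).
  { apply Rmult_le_reg_r with (2 * INR j); [lra|].
    unfold y, Rdiv; rewrite Rmult_assoc, Rinv_l by lra; nra. }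
  assert (0 < sin y) by (apply sin_gt_0; lra).
  assert (0 <= cos y) by (apply cos_ge_0; lra).
  nra.
Qed.

Lemma sin_sum_one_le j : (1 <= j)%nat -> sin_sum j 1 <= 2 * INR j / PI.
Proof.
  intros Hj. pose proof (INR_gt0 j Hj) as Hj0.
  assert (Hj1 : 1 <= INR j) by (apply (le_INR 1); lia).
  pose proof PI_RGT_0. pose proof PI_4.
  pose proof (sin_mul_sin_sum_odd j 0 Hj) as Hcot; cbv zeta in Hcot.
  change (2 * 0 + 1)%nat with 1%nat in Hcot. change (INR 1) with 1 in Hcot.
  set (y := 1 * PI / (2 * INR j)) in Hcot.
  assert (Hy0 : 0 < y) by (apply Rdiv_lt_0_compat; lra).
  assert (Hy1 : y <= PI / 2).
  { apply Rmult_le_reg_r with (2 * INR j); [lra|].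
    unfold y, Rdiv; rewrite Rmult_assoc, Rinv_l by lra; nra. }
  assert (Hsin : 0 < sin y) by (apply sin_gt_0; lra).
  pose proof (mul_cos_le_sin y ltac:(lra)).
  replace (2 * INR j / PI) with (/ y) by (unfold y; field; lra).
  assert (HyS : y * sin_sum j 1 <= 1).
  { apply Rmult_le_reg_r with (sin y); [lra|].
    replace (y * sin_sum j 1 * sin y) with (y * cos y) by (rewrite <- Hcot; ring). lra. }
  apply Rmult_le_reg_l with y; [lra|]. rewrite Rinv_r by lra. lra.
Qed.

Lemma sin_sum_reflect j : (1 <= j)%nat -> sin_sum j (j + 1) = - sin_sum j (j - 1).
Proof.
  intros Hj. unfold sin_sum.
  rewrite (sum_1_to_ext _ _ (fun k => -1 * sin (INR (j - 1) * node j k))), sum_1_to_scal.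
  - ring.
  - intros. rewrite sin_node_reflect by exact Hj. ring.
Qed.

Lemma cos_sum_eq_m1 j r : (1 <= r <= j - 1)%nat -> cos_sum j r = -1.
Proof.
  intros Hr. pose proof (INR_gt0 j ltac:(lia)). pose proof PI_RGT_0.
  set (a := 2 * INR r * PI / INR j).
  pose proof (sin_half_mul_sum_cos (j - 1) a) as Htel.
  rewrite (sum_1_to_ext _ _ (fun k => cos (2 * INR r * node j k))) in Htel
    by (intros; unfold node, a; f_equal; field; lra).
  fold (cos_sum j r) in Htel.
  replace (a / 2) with (node j r) in Htel by (unfold a, node; field; lra).
  replace ((2 * INR (j - 1) + 1) * a / 2) with (- node j r + 2 * INR r * PI) in Htel
    by (unfold a, node; rewrite minus_INR by lia; simpl INR; field; lra).
  rewrite sin_period, sin_neg in Htel.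
  pose proof (sin_node_gt0 j r Hr). nra.
Qed.

Lemma cos_sum_ge_m1 j r : (r <= j - 1)%nat -> -1 <= cos_sum j r.
Proof.
  intros Hr. destruct r as [|r].
  - unfold cos_sum. rewrite (sum_1_to_ext _ _ (fun _ => 1)), sum_1_to_const.
    + pose proof (pos_INR (j - 1)). lra.
    + intros. rewrite Rmult_0_r, Rmult_0_l. apply cos_0.
  - rewrite cos_sum_eq_m1 by lia. lra.
Qed.

Lemma weighted_sin_sum_self j : (1 <= j)%nat -> weighted_sin_sum j j = 0.
Proof.
  intros Hj. pose proof (INR_gt0 j Hj).
  apply sum_1_to_eq0. intros k _.
  replace (INR j * node j k) with (INR k * PI) by (unfold node; field; lra).
  rewrite sin_INR_mul_PI. ring.
Qed.

Lemma weighted_sin_sum_reflect j : (1 <= j)%nat ->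
  weighted_sin_sum j (j + 1) = - weighted_sin_sum j (j - 1).
Proof.
  intros Hj. unfold weighted_sin_sum.
  rewrite (sum_1_to_ext _ _
    (fun k => -1 * (weight (node j k) * sin (INR (j - 1) * node j k)))), sum_1_to_scal.
  - ring.
  - intros. rewrite sin_node_reflect by exact Hj. ring.
Qed.

Lemma weighted_sin_sum_second_diff j i :
  weighted_sin_sum j (2 * i + 5) - 2 * weighted_sin_sum j (2 * i + 3)
  + weighted_sin_sum j (2 * i + 1) =
  - (3 / 2) * sin_sum j (2 * i + 3) - / 4 * (sin_sum j (2 * i + 5) + sin_sum j (2 * i + 1)).
Proof.
  unfold weighted_sin_sum, sin_sum.
  transitivity (sum_1_to (j - 1) (fun k =>
    1 * (weight (node j k) * sin (INR (2 * i + 5) * node j k))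
    + -2 * (weight (node j k) * sin (INR (2 * i + 3) * node j k))
    + 1 * (weight (node j k) * sin (INR (2 * i + 1) * node j k)))).
  { rewrite sum_1_to_lin3. ring. }
  transitivity (sum_1_to (j - 1) (fun k =>
    - (3 / 2) * sin (INR (2 * i + 3) * node j k)
    + - / 4 * sin (INR (2 * i + 5) * node j k)
    + - / 4 * sin (INR (2 * i + 1) * node j k))).
  2: { rewrite sum_1_to_lin3. ring. }
  apply sum_1_to_ext. intros k Hk.
  pose proof (sin_node_gt0 j k Hk) as Hx.
  set (x := node j k). set (b := INR (2 * i + 3) * x).
  replace (INR (2 * i + 5) * x) with (b + 2 * x)
    by (unfold b; rewrite !plus_INR, !mult_INR; simpl INR; ring).
  replace (INR (2 * i + 1) * x) with (b - 2 * x)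
    by (unfold b; rewrite !plus_INR, !mult_INR; simpl INR; ring).
  transitivity (weight x * (sin (b + 2 * x) - 2 * sin b + sin (b - 2 * x))); [ring|].
  rewrite weight_mul_sin_second_diff by (apply Rgt_not_eq; exact Hx). ring.
Qed.

Lemma weighted_sin_sum_three_gt0 j : (5 <= j)%nat -> 0 < weighted_sin_sum j 3.
Proof.
  intros Hj.
  assert (Hlow : sum_1_to (j - 1) (fun k => 27 / 10 - 16 / 5 * sin (INR 1 * node j k))
                 <= weighted_sin_sum j 3).
  { apply sum_1_to_le. intros k Hk. change (INR 1) with 1. rewrite Rmult_1_l.
    replace (INR 3) with 3 by (simpl; ring).
    apply weight_mul_sin3_ge, sin_node_gt0, Hk. }
  rewrite sum_1_to_minus, sum_1_to_const, sum_1_to_scal in Hlow. fold (sin_sum j 1) in Hlow.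
  pose proof (sin_sum_one_le j ltac:(lia)).
  rewrite minus_INR in Hlow by lia. change (INR 1) with 1 in Hlow.
  pose proof (le_INR 5 j ltac:(lia)) as HJ; simpl INR in HJ.
  assert (HPI : 3 < PI) by (pose proof PI2_3_2; lra).
  assert (2 * INR j / PI <= 2 * INR j / 3).
  { unfold Rdiv. apply Rmult_le_compat_l; [lra|]. apply Rinv_le_contravar; lra. }
  lra.
Qed.

Lemma weighted_sin_sum_odd_concave j : (1 <= j)%nat ->
  concave_upto (fun i => weighted_sin_sum j (2 * i + 1)) (j / 2).
Proof.
  intros Hj i Hi. pose proof (Nat.Div0.mul_div_le j 2).
  replace (2 * (i + 2) + 1)%nat with (2 * i + 5)%nat by lia.
  replace (2 * (i + 1) + 1)%nat with (2 * i + 3)%nat by lia.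
  pose proof (weighted_sin_sum_second_diff j i).
  pose proof (sin_sum_odd_ge0 j i ltac:(lia)).
  pose proof (sin_sum_odd_ge0 j (i + 1) ltac:(lia)) as H3.
  replace (2 * (i + 1) + 1)%nat with (2 * i + 3)%nat in H3 by lia.
  destruct (Nat.le_gt_cases (2 * i + 5) j) as [H5|H5].
  - pose proof (sin_sum_odd_ge0 j (i + 2) ltac:(lia)) as H5'.
    replace (2 * (i + 2) + 1)%nat with (2 * i + 5)%nat in H5' by lia. lra.
  - pose proof (sin_sum_reflect j Hj) as Hrefl.
    replace (j + 1)%nat with (2 * i + 5)%nat in Hrefl by lia.
    replace (j - 1)%nat with (2 * i + 3)%nat in Hrefl by lia. lra.
Qed.

Lemma weighted_sin_sum_odd_gt0 j i : (5 <= j)%nat -> (1 <= i < j / 2)%nat ->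
  0 < weighted_sin_sum j (2 * i + 1).
Proof.
  intros Hj Hi. set (a := fun i => weighted_sin_sum j (2 * i + 1)). change (0 < a i).
  pose proof (weighted_sin_sum_odd_concave j ltac:(lia)) as Hconc.
  assert (Ha1 : 0 < a 1%nat) by exact (weighted_sin_sum_three_gt0 j Hj).
  pose proof (Nat.div_mod_eq j 2). pose proof (Nat.mod_upper_bound j 2 ltac:(lia)).
  destruct (Nat.eq_dec (j mod 2) 1) as [Hodd|Heven].
  - apply (concave_upto_gt0 a 1 (j / 2)); [exact Hconc | exact Ha1 | | lia].
    unfold a. replace (2 * (j / 2) + 1)%nat with j by lia.
    rewrite weighted_sin_sum_self by lia. lra.
  - apply (concave_upto_gt0_antisym a 1 (j / 2)); [exact Hconc | exact Ha1 | lia | | lia].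
    unfold a. replace (2 * (j / 2) + 1)%nat with (j + 1)%nat by lia.
    replace (2 * (j / 2 - 1) + 1)%nat with (j - 1)%nat by lia.
    apply weighted_sin_sum_reflect. lia.
Qed.

Lemma g1_incr j p : (1 <= j)%nat ->
  g1 j (p + 3) - g1 j (p + 2) =
  weighted_sin_sum j (2 * p + 3) +
  / 2 * (cos_sum j (p + 2) + cos_sum j p - cos_sum j (p + 3) - cos_sum j (p + 1)).
Proof.
  intros Hj. pose proof (INR_gt0 j Hj).
  unfold g1. rewrite <- sum_1_to_minus.
  rewrite (sum_1_to_ext _ _ (fun k =>
    weight (node j k) * sin (INR (2 * p + 3) * node j k) +
    / 2 * (cos (2 * INR (p + 2) * node j k) + cos (2 * INR p * node j k)
           - cos (2 * INR (p + 3) * node j k) - cos (2 * INR (p + 1) * node j k)))).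
  - rewrite sum_1_to_plus, sum_1_to_scal, !sum_1_to_minus, sum_1_to_plus. reflexivity.
  - intros k Hk. pose proof (sin_node_gt0 j k Hk) as Hx. set (x := node j k) in *.
    assert (Hnode : forall c, c * INR k * PI / INR j = c * x)
      by (intros; unfold x, node; field; lra).
    rewrite !Hnode.
    replace (INR (p + 3) - 1) with (INR p + 2) by (rewrite plus_INR; simpl; ring).
    replace (INR (p + 2) - 1) with (INR p + 2 - 1) by (rewrite plus_INR; simpl; ring).
    rewrite fbold_mul_cos_incr by exact Hx.
    replace (INR p + 2 - 2) with (INR p) by ring.
    replace (2 * (INR p + 2) - 1) with (INR (2 * p + 3))
      by (rewrite plus_INR, mult_INR; simpl; ring).
    replace (INR p + 2 + 1) with (INR (p + 3)) by (rewrite plus_INR; simpl; ring).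
    replace (INR p + 2 - 1) with (INR (p + 1)) by (rewrite plus_INR; simpl; ring).
    replace (INR p + 2) with (INR (p + 2)) by (rewrite plus_INR; simpl; ring).
    reflexivity.
Qed.

Lemma g1_lt_succ j l : (2 <= l)%nat -> (l + 1 <= (j + 1) / 2)%nat -> g1 j l < g1 j (S l).
Proof.
  intros Hl Hlj.
  pose proof (Nat.div_mod_eq (j + 1) 2). pose proof (Nat.mod_upper_bound (j + 1) 2 ltac:(lia)).
  pose proof (Nat.div_mod_eq j 2). pose proof (Nat.mod_upper_bound j 2 ltac:(lia)).
  destruct (Nat.le_exists_sub 2 l Hl) as [p [-> _]].
  replace (S (p + 2)) with (p + 3)%nat by lia.
  apply Rlt_0_minus. rewrite g1_incr by lia.
  rewrite (cos_sum_eq_m1 j (p + 1)), (cos_sum_eq_m1 j (p + 2)), (cos_sum_eq_m1 j (p + 3)) by lia.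
  pose proof (cos_sum_ge_m1 j p ltac:(lia)).
  replace (2 * p + 3)%nat with (2 * (p + 1) + 1)%nat by lia.
  pose proof (weighted_sin_sum_odd_gt0 j (p + 1) ltac:(lia) ltac:(lia)). lra.
Qed.

Theorem proposition4p1 :
  forall j : nat, (3 <= j)%nat ->
  forall l1 l2 : nat,
    (2 <= l1)%nat -> (l1 < l2)%nat -> (l2 <= (j + 1) / 2)%nat ->
    g1 j l1 < g1 j l2.
Proof.
  intros j _ l1 l2 Hl1 Hl12. induction Hl12 as [|l2 Hl12 IH]; intros Hl2.
  - apply g1_lt_succ; lia.
  - pose proof (g1_lt_succ j l2 ltac:(lia) ltac:(lia)). specialize (IH ltac:(lia)). lra.
Qed.
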